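(* Let $\mathcal{C}$ be a Grothendieck site with enough points, let $X,Y$ be presheaves of groupoids on $\mathcal{C}$ with $\Gamma=\mathbb{Z}/2\mathbb{Z}$-actions, and let $f\colon X\to Y$ be a $\Gamma$-equivariant morphism. If $f$ is a local fibration, then $f^{h\Gamma}\colon X^{h\Gamma}\to Y^{h\Gamma}$ is a local fibration.
   Context: A groupoid is a small category with all morphisms invertible. A map of groupoids $f\colon X\to Y$ is a fibration if for every object $x$ and isomorphism $\alpha\colon f(x)\to y$ in $Y$ there is an isomorphism $\beta\colon x\to x_1$ with $f(\beta)=\alpha$. A presheaf of groupoids is a strict contravariant functor from $\mathcal{C}$ to groupoids; stalks at points are defined by the same colimit formula as for presheaves of sets. A morphism of presheaves of groupoids is a local fibration if it induces a fibration of groupoids on all stalks at points of $\mathcal{C}$. A $\Gamma$-action on a presheaf of groupoids is a $\Gamma$-action on each $X(U)$ (on objects and morphisms, compatible with structure maps; nontrivial element $x\mapsto\bar x$) compatible with restrictions; a $\Gamma$-equivariant morphism commutes with the actions on sections. For a groupoid $X$ with $\Gamma$-action, $X^{h\Gamma}$ has objects $(x,\phi)$ with $\phi\in\mathrm{Hom}(x,\bar x)$, $\bar\phi=\phi^{-1}$, and arrows $(x,\phi)\to(x_1,\phi_1)$ the $\alpha\colon x\to x_1$ with $\phi_1\alpha=\bar\alpha\phi$; for presheaves $X^{h\Gamma}(U)=X(U)^{h\Gamma}$, and $f^{h\Gamma}$ is given on sections by $(x,\phi)\mapsto(f(x),f(\phi))$, $\alpha\mapsto f(\alpha)$. *)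

Set Implicit Arguments.
Unset Strict Implicit.

Record Category := {
  Ob :> Type;
  Hom : Ob -> Ob -> Type;
  idm : forall U, Hom U U;
  comp : forall U V W, Hom V W -> Hom U V -> Hom U W;
  comp_idl : forall U V (f : Hom U V), comp (idm V) f = f;
  comp_idr : forall U V (f : Hom U V), comp f (idm U) = f;
  comp_assoc : forall U V W Z (f : Hom U V) (g : Hom V W) (h : Hom W Z),
      comp h (comp g f) = comp (comp h g) f }.
Arguments Hom {c} U V.
Arguments idm {c} U.
Arguments comp {c U V W} g f.

Definition sieve (C : Category) (U : C) := forall V : C, Hom V U -> Prop.
Arguments sieve : clear implicits.
Definition is_sieve (C : Category) (U : C) (S : sieve C U) : Prop :=
  forall (V W : C) (f : Hom V U) (g : Hom W V), S V f -> S W (comp f g).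
Definition pb_sieve (C : Category) (U : C) (S : sieve C U) (V : C) (g : Hom V U)
  : sieve C V := fun W h => S W (comp g h).
Definition max_sieve (C : Category) (U : C) : sieve C U := fun _ _ => True.

Record Topology (C : Category) := {
  covers : forall U : C, sieve C U -> Prop;
  covers_sieve : forall (U : C) (S : sieve C U), @covers U S -> is_sieve S;
  covers_ext : forall (U : C) (S S' : sieve C U), @covers U S ->
      (forall V f, S V f <-> S' V f) -> @covers U S';
  covers_max : forall U : C, @covers U (@max_sieve C U);
  covers_stable : forall (U : C) (S : sieve C U) (V : C) (g : Hom V U),
      @covers U S -> @covers V (pb_sieve S g);
  covers_trans : forall (U : C) (S R : sieve C U), @covers U S -> is_sieve R ->
      (forall V (f : Hom V U), S V f -> @covers V (pb_sieve R f)) -> @covers U R }.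
Arguments covers {C} t U S.

Record Site := { site_cat :> Category; site_top : Topology site_cat }.

(** * Points of a site: flat (cofiltering) continuous functors C -> Type *)
Record Point (S : Site) := {
  pt :> S -> Type;
  ptmap : forall U V : S, Hom U V -> pt U -> pt V;
  ptmap_id : forall (U : S) (u : pt U), ptmap (idm U) u = u;
  ptmap_comp : forall (U V W : S) (f : Hom U V) (g : Hom V W) (u : pt U),
      ptmap (comp g f) u = ptmap g (ptmap f u);
  pt_nonempty : exists U : S, inhabited (pt U);
  pt_pair : forall (U V : S) (u : pt U) (v : pt V),
      exists (W : S) (w : pt W) (a : Hom W U) (b : Hom W V),
        ptmap a w = u /\ ptmap b w = v;
  pt_equalize : forall (U V : S) (a b : Hom U V) (u : pt U),
      ptmap a u = ptmap b u ->
      exists (W : S) (w : pt W) (c : Hom W U), ptmap c w = u /\ comp a c = comp b c;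
  pt_continuous : forall (U : S) (R : sieve S U), covers (site_top S) U R ->
      forall u : pt U, exists (V : S) (f : Hom V U) (v : pt V), R V f /\ ptmap f v = u }.
Arguments ptmap {S} p {U V} f u.

(** Germs: elements of the stalk colim_{(U,u), u in p(U)} T(U) of a
    contravariant family T with restriction maps r. *)
Definition germ (S : Site) (p : Point S) (T : S -> Type) := { U : S & (p U * T U)%type }.

Definition germ_eq (S : Site) (p : Point S) (T : S -> Type)
  (r : forall U V : S, Hom U V -> T V -> T U) (g h : germ p T) : Prop :=
  exists (W : S) (w : p W) (a : Hom W (projT1 g)) (b : Hom W (projT1 h)),
    ptmap p a w = fst (projT2 g) /\ ptmap p b w = fst (projT2 h) /\
    r _ _ a (snd (projT2 g)) = r _ _ b (snd (projT2 h)).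

Definition germ_map (S : Site) (p : Point S) (T T' : S -> Type)
  (m : forall U, T U -> T' U) (g : germ p T) : germ p T' :=
  existT _ (projT1 g) (fst (projT2 g), m _ (snd (projT2 g))).

Record Psh (C : Category) := {
  sec :> C -> Type;
  res : forall U V : C, Hom U V -> sec V -> sec U;
  res_id : forall (U : C) (x : sec U), res (idm U) x = x;
  res_comp : forall (U V W : C) (f : Hom U V) (g : Hom V W) (x : sec W),
      res (comp g f) x = res f (res g x) }.
Arguments res {C} p {U V} f x.

Definition is_sheaf (C : Category) (J : Topology C) (F : Psh C) : Prop :=
  forall (U : C) (R : sieve C U), covers J U R ->
  forall s : forall (V : C) (f : Hom V U), R V f -> F V,
  (forall (V W : C) (f : Hom V U) (g : Hom W V) (H1 : R V f) (H2 : R W (comp f g)),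
      s W (comp f g) H2 = res F g (s V f H1)) ->
  exists x : F U, (forall V f (H : R V f), res F f x = s V f H) /\
    (forall y : F U, (forall V f (H : R V f), res F f y = s V f H) -> y = x).

Record PshMor (C : Category) (F G : Psh C) := {
  pmor :> forall U : C, F U -> G U;
  pmor_nat : forall (U V : C) (f : Hom U V) (x : F V), @pmor U (res F f x) = res G f (@pmor V x) }.

Definition bijective (A B : Type) (h : A -> B) : Prop :=
  (forall x y, h x = h y -> x = y) /\ (forall y, exists x, h x = y).

(** the map of stalks F_p -> G_p is a bijection (stalks as quotients of germs) *)
Definition stalk_bijective (S : Site) (p : Point S) (F G : Psh S) (phi : PshMor F G) : Prop :=
  (forall x y : germ p F,
     germ_eq (fun U V f => res G f) (germ_map phi x) (germ_map phi y) ->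
     germ_eq (fun U V f => res F f) x y) /\
  (forall y : germ p G, exists x : germ p F,
     germ_eq (fun U V f => res G f) (germ_map phi x) y).

Definition enough_points (S : Site) : Prop :=
  exists (I : Type) (q : I -> Point S),
    forall (F G : Psh S) (phi : PshMor F G),
      is_sheaf (site_top S) F -> is_sheaf (site_top S) G ->
      (forall i, stalk_bijective (q i) phi) -> forall U : S, bijective (phi U).

Record Groupoid := {
  gob :> Type;
  ghom : gob -> gob -> Type;
  gid : forall x, ghom x x;
  gcomp : forall x y z, ghom y z -> ghom x y -> ghom x z;
  ginv : forall x y, ghom x y -> ghom y x;
  gcomp_idl : forall x y (f : ghom x y), gcomp (gid y) f = f;
  gcomp_idr : forall x y (f : ghom x y), gcomp f (gid x) = f;
  gcomp_assoc : forall x y z t (f : ghom x y) (g : ghom y z) (h : ghom z t),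
      gcomp h (gcomp g f) = gcomp (gcomp h g) f;
  ginv_l : forall x y (f : ghom x y), gcomp (ginv f) f = gid x;
  ginv_r : forall x y (f : ghom x y), gcomp f (ginv f) = gid y }.
Arguments ghom {g0} x y.
Arguments gid {g0} x.
Arguments gcomp {g0 x y z} h f.
Arguments ginv {g0 x y} f.

Record GFunctor (G H : Groupoid) := {
  fob :> G -> H;
  fhom : forall x y : G, ghom x y -> ghom (fob x) (fob y);
  fhom_comp : forall (x y z : G) (f : ghom x y) (g : ghom y z),
      fhom (gcomp g f) = gcomp (fhom g) (fhom f);
  fhom_id : forall x : G, fhom (gid x) = gid (fob x) }.
Arguments fhom {G H} g0 {x y} f.

Definition Arr (G : Groupoid) := { x : G & { y : G & ghom x y } }.
Definition mkArr (G : Groupoid) (x y : G) (f : ghom x y) : Arr G := existT _ x (existT _ y f).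
Definition asrc (G : Groupoid) (a : Arr G) : G := projT1 a.
Definition atgt (G : Groupoid) (a : Arr G) : G := projT1 (projT2 a).
Definition ainv (G : Groupoid) (a : Arr G) : Arr G :=
  mkArr (ginv (projT2 (projT2 a))).
Definition farr (G H : Groupoid) (F : GFunctor G H) (a : Arr G) : Arr H :=
  mkArr (fhom F (projT2 (projT2 a))).
Definition AComp (G : Groupoid) (f g h : Arr G) : Prop :=
  exists (x y z : G) (f' : ghom x y) (g' : ghom y z),
    f = mkArr f' /\ g = mkArr g' /\ h = mkArr (gcomp g' f').

(** * Presheaves of groupoids (strict contravariant functors C -> Gpd) *)
Record PshGpd (C : Category) := {
  gsec :> C -> Groupoid;
  gres : forall U V : C, Hom U V -> GFunctor (gsec V) (gsec U);
  gres_id_ob : forall (U : C) (x : gsec U), gres (idm U) x = x;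
  gres_id_arr : forall (U : C) (a : Arr (gsec U)), farr (gres (idm U)) a = a;
  gres_comp_ob : forall (U V W : C) (f : Hom U V) (g : Hom V W) (x : gsec W),
      gres (comp g f) x = gres f (gres g x);
  gres_comp_arr : forall (U V W : C) (f : Hom U V) (g : Hom V W) (a : Arr (gsec W)),
      farr (gres (comp g f)) a = farr (gres f) (farr (gres g) a) }.
Arguments gres {C} p {U V} f.

Record PshGpdMor (C : Category) (X Y : PshGpd C) := {
  gm :> forall U : C, GFunctor (X U) (Y U);
  gm_nat_ob : forall (U V : C) (f : Hom U V) (x : X V), gm U (gres X f x) = gres Y f (gm V x);
  gm_nat_arr : forall (U V : C) (f : Hom U V) (a : Arr (X V)),
      farr (gm U) (farr (gres X f) a) = farr (gres Y f) (farr (gm V) a) }.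

(** Gamma = Z/2Z action: the nontrivial element acts by an involutive
    groupoid automorphism x |-> bar x on each X(U), compatible with restrictions. *)
Record Z2Action (C : Category) (X : PshGpd C) := {
  act : forall U : C, GFunctor (X U) (X U);
  act_invol_ob : forall (U : C) (x : X U), act U (act U x) = x;
  act_invol_arr : forall (U : C) (a : Arr (X U)), farr (act U) (farr (act U) a) = a;
  act_res_ob : forall (U V : C) (f : Hom U V) (x : X V), act U (gres X f x) = gres X f (act V x);
  act_res_arr : forall (U V : C) (f : Hom U V) (a : Arr (X V)),
      farr (act U) (farr (gres X f) a) = farr (gres X f) (farr (act V) a) }.

Definition equivariant (C : Category) (X Y : PshGpd C) (aX : Z2Action X) (aY : Z2Action Y)
  (m : PshGpdMor X Y) : Prop :=
  (forall (U : C) (x : X U), m U (act aX U x) = act aY U (m U x)) /\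
  (forall (U : C) (a : Arr (X U)), farr (m U) (farr (act aX U) a) = farr (act aY U) (farr (m U) a)).

Definition HOb (G : Groupoid) (s : GFunctor G G) :=
  { x : G & { phi : Arr G | asrc phi = x /\ atgt phi = s x /\ farr s phi = ainv phi } }.
Definition hx (G : Groupoid) (s : GFunctor G G) (o : HOb s) : G := projT1 o.
Definition hphi (G : Groupoid) (s : GFunctor G G) (o : HOb s) : Arr G := proj1_sig (projT2 o).
Definition HArr (G : Groupoid) (s : GFunctor G G) :=
  { a : HOb s & { b : HOb s & { al : Arr G |
      asrc al = hx a /\ atgt al = hx b /\
      exists h : Arr G, AComp al (hphi b) h /\ AComp (hphi a) (farr s al) h } } }.

Lemma asrc_farr (G H : Groupoid) (F : GFunctor G H) (a : Arr G) : asrc (farr F a) = F (asrc a).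
Proof. destruct a as [x [y m]]; reflexivity. Qed.
Lemma atgt_farr (G H : Groupoid) (F : GFunctor G H) (a : Arr G) : atgt (farr F a) = F (atgt a).
Proof. destruct a as [x [y m]]; reflexivity. Qed.

Lemma fhom_inv (G H : Groupoid) (F : GFunctor G H) (x y : G) (m : ghom x y) :
  fhom F (ginv m) = ginv (fhom F m).
Proof.
  rewrite <- (gcomp_idl (fhom F (ginv m))).
  rewrite <- (ginv_l (fhom F m)).
  rewrite <- gcomp_assoc, <- fhom_comp, ginv_r, fhom_id, gcomp_idr. reflexivity.
Qed.

Lemma farr_ainv (G H : Groupoid) (F : GFunctor G H) (a : Arr G) :
  farr F (ainv a) = ainv (farr F a).
Proof. destruct a as [x [y m]]; unfold farr, ainv, mkArr; simpl; rewrite fhom_inv; reflexivity. Qed.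

Lemma AComp_farr (G H : Groupoid) (F : GFunctor G H) (f g h : Arr G) :
  AComp f g h -> AComp (farr F f) (farr F g) (farr F h).
Proof.
  intros (x & y & z & f' & g' & -> & -> & ->).
  exists (F x), (F y), (F z), (fhom F f'), (fhom F g').
  unfold farr, mkArr; simpl; rewrite fhom_comp; auto.
Qed.

Section HMap.
Variables (G H : Groupoid) (s : GFunctor G G) (s' : GFunctor H H) (F : GFunctor G H).
Hypothesis hob : forall x : G, F (s x) = s' (F x).
Hypothesis harr : forall a : Arr G, farr F (farr s a) = farr s' (farr F a).

Lemma hmap_ob_ok (o : HOb s) :
  asrc (farr F (hphi o)) = F (hx o) /\ atgt (farr F (hphi o)) = s' (F (hx o)) /\
  farr s' (farr F (hphi o)) = ainv (farr F (hphi o)).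
Proof.
  destruct o as [x [phi [P1 [P2 P3]]]]; unfold hphi, hx; cbn [projT1 projT2 proj1_sig].
  rewrite asrc_farr, atgt_farr, P1, P2, hob, <- harr, P3, farr_ainv. auto.
Qed.

Definition hmap_ob (o : HOb s) : HOb s' :=
  existT _ (F (hx o)) (exist _ (farr F (hphi o)) (hmap_ob_ok o)).

Lemma hmap_arr_ok (a b : HOb s) (al : Arr G)
  (P : asrc al = hx a /\ atgt al = hx b /\
       exists h : Arr G, AComp al (hphi b) h /\ AComp (hphi a) (farr s al) h) :
  asrc (farr F al) = hx (hmap_ob a) /\ atgt (farr F al) = hx (hmap_ob b) /\
  exists h : Arr H, AComp (farr F al) (hphi (hmap_ob b)) h /\
                    AComp (hphi (hmap_ob a)) (farr s' (farr F al)) h.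
Proof.
  destruct P as [P1 [P2 [h [Q1 Q2]]]].
  unfold hx, hphi, hmap_ob; cbn [projT1 projT2 proj1_sig].
  rewrite asrc_farr, atgt_farr, P1, P2. split; [reflexivity | split; [reflexivity|]].
  exists (farr F h). split.
  - apply AComp_farr; exact Q1.
  - rewrite <- harr. apply AComp_farr; exact Q2.
Qed.

Definition hmap_arr (t : HArr s) : HArr s' :=
  let a := projT1 t in let b := projT1 (projT2 t) in
  existT _ (hmap_ob a) (existT _ (hmap_ob b)
    (exist _ (farr F (proj1_sig (projT2 (projT2 t))))
       (hmap_arr_ok (proj2_sig (projT2 (projT2 t)))))).
End HMap.

(** * Presheaves of "graphs" (objects and arrows with source/target):
    the data of a presheaf of groupoids that enters the definition of a
    fibration on stalks. *)
Record PshGraph (C : Category) := {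
  vob : C -> Type;
  varr : C -> Type;
  vsrc : forall U : C, varr U -> vob U;
  vtgt : forall U : C, varr U -> vob U;
  vres_ob : forall U V : C, Hom U V -> vob V -> vob U;
  vres_arr : forall U V : C, Hom U V -> varr V -> varr U }.
Arguments vsrc {C} p {U} _.
Arguments vtgt {C} p {U} _.
Arguments vres_ob {C} p {U V} _ _.
Arguments vres_arr {C} p {U V} _ _.

Record GraphMor (C : Category) (X Y : PshGraph C) := {
  mob : forall U : C, vob X U -> vob Y U;
  marr : forall U : C, varr X U -> varr Y U }.
Arguments mob {C X Y} g {U} _.
Arguments marr {C X Y} g {U} _.

(** The stalk at p of a presheaf of groupoids is the filtered colimit, computed
    levelwise on objects and arrows (germs).  f_p is a fibration of groupoids:
    for every object x of X_p and arrow alpha : f_p(x) -> y of Y_p there is an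
    arrow beta : x -> x1 of X_p with f_p(beta) = alpha. *)
Definition stalk_fibration (S : Site) (p : Point S) (X Y : PshGraph S) (m : GraphMor X Y) : Prop :=
  forall (x : germ p (vob X)) (al : germ p (varr Y)),
    germ_eq (fun U V => @vres_ob _ Y U V) (germ_map (fun U => @vsrc _ Y U) al) (germ_map (fun U => @mob _ _ _ m U) x) ->
    exists be : germ p (varr X),
      germ_eq (fun U V => @vres_ob _ X U V) (germ_map (fun U => @vsrc _ X U) be) x /\
      germ_eq (fun U V => @vres_arr _ Y U V) (germ_map (fun U => @marr _ _ _ m U) be) al.

Definition local_fibration (S : Site) (X Y : PshGraph S) (m : GraphMor X Y) : Prop :=
  forall p : Point S, stalk_fibration p m.

Definition gpd_graph (C : Category) (X : PshGpd C) : PshGraph C := {|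
  vob := fun U => gob (X U);
  varr := fun U => Arr (X U);
  vsrc := fun U a => asrc a;
  vtgt := fun U a => atgt a;
  vres_ob := fun U V f x => gres X f x;
  vres_arr := fun U V f a => farr (gres X f) a |}.

Definition gpdmor_graph (C : Category) (X Y : PshGpd C) (m : PshGpdMor X Y)
  : GraphMor (gpd_graph X) (gpd_graph Y) :=
  @Build_GraphMor C (gpd_graph X) (gpd_graph Y)
    (fun U (x : gob (X U)) => m U x) (fun U (a : Arr (X U)) => farr (m U) a).

Definition hfp_graph (C : Category) (X : PshGpd C) (aX : Z2Action X) : PshGraph C := {|
  vob := fun U => HOb (act aX U);
  varr := fun U => HArr (act aX U);
  vsrc := fun U t => projT1 t;
  vtgt := fun U t => projT1 (projT2 t);
  vres_ob := fun U V f =>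
    hmap_ob (fun x => eq_sym (act_res_ob aX f x)) (fun a => eq_sym (act_res_arr aX f a));
  vres_arr := fun U V f =>
    hmap_arr (fun x => eq_sym (act_res_ob aX f x)) (fun a => eq_sym (act_res_arr aX f a)) |}.

Definition hfp_mor (C : Category) (X Y : PshGpd C) (aX : Z2Action X) (aY : Z2Action Y)
  (m : PshGpdMor X Y) (E : equivariant aX aY m) : GraphMor (hfp_graph aX) (hfp_graph aY) :=
  @Build_GraphMor C (hfp_graph aX) (hfp_graph aY)
    (fun U => hmap_ob (proj1 E U) (proj2 E U))
    (fun U => hmap_arr (proj1 E U) (proj2 E U)).

(* Homotopy fixed points commute with passing to stalks.  A germ of an arrow
   of Y^{hΓ} out of f^{hΓ}(x, φ) has an underlying germ of an arrow of Y out of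
   f(x), which lifts along f to a germ β : x → x₁ of an arrow of X over a
   smaller neighbourhood of the point.  Transporting φ along β, that is
   φ₁ := β̄ ∘ φ ∘ β⁻¹, turns β into an arrow (x, φ) → (x₁, φ₁) of X^{hΓ}; since
   the target of an arrow of homotopy fixed points is determined by its source
   and its underlying arrow, this arrow maps to the given one.  The argument is
   stalkwise. *)

From Stdlib Require Import ProofIrrelevance Eqdep.
Set Implicit Arguments.
Unset Strict Implicit.

Section GroupoidArrows.
Variable G : Groupoid.

Lemma gcomp_cancel_r (x y z : G) (f : ghom x y) (g g' : ghom y z) :
  gcomp g f = gcomp g' f -> g = g'.
Proof.
  intro E.
  rewrite <- (gcomp_idr g), <- (gcomp_idr g'), <- (ginv_r f), !gcomp_assoc, E.
  reflexivity.
Qed.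

Lemma ginv_unique (x y : G) (f : ghom x y) (g : ghom y x) :
  gcomp g f = gid x -> g = ginv f.
Proof.
  intro E. rewrite <- (ginv_l f) in E. exact (gcomp_cancel_r E).
Qed.

Lemma ginv_ginv (x y : G) (f : ghom x y) : ginv (ginv f) = f.
Proof. symmetry. apply ginv_unique, ginv_r. Qed.

Lemma ginv_comp (x y z : G) (f : ghom x y) (g : ghom y z) :
  ginv (gcomp g f) = gcomp (ginv f) (ginv g).
Proof.
  symmetry. apply ginv_unique.
  rewrite gcomp_assoc, <- (gcomp_assoc g (ginv g)), ginv_l, gcomp_idr, ginv_l.
  reflexivity.
Qed.

Lemma mkArr_inj (x y : G) (f g : ghom x y) : mkArr f = mkArr g -> f = g.
Proof. intro E. do 2 apply inj_pairT2 in E. exact E. Qed.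

Definition aid (x : G) : Arr G := mkArr (gid x).

Lemma ainv_ainv (a : Arr G) : ainv (ainv a) = a.
Proof. destruct a as [x [y m]]. unfold ainv, mkArr; cbn. rewrite ginv_ginv. reflexivity. Qed.

Lemma asrc_ainv (a : Arr G) : asrc (ainv a) = atgt a.
Proof. destruct a as [x [y m]]. reflexivity. Qed.

Lemma atgt_ainv (a : Arr G) : atgt (ainv a) = asrc a.
Proof. destruct a as [x [y m]]. reflexivity. Qed.

End GroupoidArrows.

(* An equation between packed arrows splits into equations of endpoints,
   which are substituted, and one between the underlying morphisms. *)
Ltac arr_inj H :=
  let es := fresh "es" in let et := fresh "et" in
  pose proof (f_equal (@asrc _) H) as es; pose proof (f_equal (@atgt _) H) as et;
  cbn in es, et; subst; apply mkArr_inj in H; subst.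

Section Composition.
Variable G : Groupoid.

Lemma AComp_exists (f g : Arr G) : atgt f = asrc g -> exists h, AComp f g h.
Proof.
  destruct f as [x [y f1]], g as [y' [z g1]]; cbn; intro E; subst.
  exists (mkArr (gcomp g1 f1)), x, y', z, f1, g1. auto.
Qed.

Lemma AComp_ends (f g h : Arr G) : AComp f g h ->
  asrc h = asrc f /\ atgt h = atgt g /\ atgt f = asrc g.
Proof. intros (x & y & z & f1 & g1 & -> & -> & ->). cbn. auto. Qed.

Lemma AComp_unique (f g h h' : Arr G) : AComp f g h -> AComp f g h' -> h = h'.
Proof.
  intros (x & y & z & f1 & g1 & -> & -> & ->) (x' & y' & z' & f2 & g2 & Ef & Eg & ->).
  arr_inj Ef. arr_inj Eg. reflexivity.
Qed.

Lemma AComp_cancel_l (f g g' h : Arr G) : AComp f g h -> AComp f g' h -> g = g'.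
Proof.
  intros (x & y & z & f1 & g1 & -> & -> & ->) (x' & y' & z' & f2 & g2 & Ef & -> & Eh).
  arr_inj Ef. arr_inj Eh. apply gcomp_cancel_r in Eh. subst. reflexivity.
Qed.

Lemma AComp_assoc (f g fg k r gk : Arr G) :
  AComp f g fg -> AComp fg k r -> AComp g k gk -> AComp f gk r.
Proof.
  intros (x & y & z & f1 & g1 & -> & -> & ->) (x2 & y2 & z2 & a1 & k1 & Ea & -> & ->)
    (x3 & y3 & z3 & g2 & k2 & Eg & Ek & ->).
  arr_inj Ea. arr_inj Eg. arr_inj Ek.
  do 3 eexists; exists f1, (gcomp k2 g2). repeat split. rewrite gcomp_assoc. reflexivity.
Qed.

Lemma AComp_id_l (x : G) (f : Arr G) : asrc f = x -> AComp (aid x) f f.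
Proof.
  destruct f as [a [b m]]; cbn; intro; subst.
  exists x, x, b, (gid x), m. repeat split. rewrite gcomp_idr. reflexivity.
Qed.

Lemma AComp_inv_r (f : Arr G) : AComp f (ainv f) (aid (asrc f)).
Proof.
  destruct f as [a [b m]]. exists a, b, a, m, (ginv m). repeat split.
  unfold aid; cbn. rewrite ginv_l. reflexivity.
Qed.

Lemma AComp_ainv (f g h : Arr G) : AComp f g h -> AComp (ainv g) (ainv f) (ainv h).
Proof.
  intros (x & y & z & f1 & g1 & -> & -> & ->).
  exists z, y, x, (ginv g1), (ginv f1). repeat split.
  unfold ainv; cbn. rewrite ginv_comp. reflexivity.
Qed.

End Composition.

Section HomotopyFixedPoints.
Variables (G : Groupoid) (s : GFunctor G G).

Definition is_harr (o o1 : HOb s) (al : Arr G) : Prop :=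
  asrc al = hx o /\ atgt al = hx o1 /\
  exists h : Arr G, AComp al (hphi o1) h /\ AComp (hphi o) (farr s al) h.

Definition hsrc (t : HArr s) : HOb s := projT1 t.
Definition htgt (t : HArr s) : HOb s := projT1 (projT2 t).
Definition hal (t : HArr s) : Arr G := proj1_sig (projT2 (projT2 t)).

Lemma hphi_spec (o : HOb s) :
  asrc (hphi o) = hx o /\ atgt (hphi o) = s (hx o) /\ farr s (hphi o) = ainv (hphi o).
Proof. exact (proj2_sig (projT2 o)). Qed.

Lemma hal_spec (t : HArr s) : is_harr (hsrc t) (htgt t) (hal t).
Proof. exact (proj2_sig (projT2 (projT2 t))). Qed.

Lemma HOb_eq (o o' : HOb s) : hx o = hx o' -> hphi o = hphi o' -> o = o'.
Proof.
  destruct o as [x [p P]], o' as [x' [p' P']]; unfold hx, hphi; cbn; intros; subst.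
  f_equal. f_equal. apply proof_irrelevance.
Qed.

Lemma HArr_eq (t t' : HArr s) :
  hsrc t = hsrc t' -> htgt t = htgt t' -> hal t = hal t' -> t = t'.
Proof.
  destruct t as [a [b [al P]]], t' as [a' [b' [al' P']]]; unfold hsrc, htgt, hal; cbn.
  intros; subst. f_equal. f_equal. f_equal. apply proof_irrelevance.
Qed.

(* The condition φ₁ ∘ α = ᾱ ∘ φ determines φ₁ from φ and α. *)
Lemma is_harr_target_unique (o o1 o2 : HOb s) (al : Arr G) :
  is_harr o o1 al -> is_harr o o2 al -> o1 = o2.
Proof.
  intros (_ & T1 & h1 & C1 & D1) (_ & T2 & h2 & C2 & D2).
  apply HOb_eq; [congruence|].
  rewrite (AComp_unique D2 D1) in C2.
  exact (AComp_cancel_l C1 C2).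
Qed.

Hypothesis s_invol : forall a : Arr G, farr s (farr s a) = a.

(* φ₁ := β̄ ∘ φ ∘ β⁻¹ is again a homotopy fixed structure, because β̄̄ = β. *)
Lemma hob_transport (o : HOb s) (be : Arr G) :
  asrc be = hx o -> exists o1 : HOb s, is_harr o o1 be.
Proof.
  intro Hbe.
  destruct (hphi_spec o) as (P1 & P2 & P3).
  set (phi := hphi o) in *.
  destruct (@AComp_exists G (ainv be) phi) as [c1 Hc1].
  { rewrite atgt_ainv, Hbe, P1. reflexivity. }
  destruct (AComp_ends Hc1) as (Ec1s & Ec1t & _).
  destruct (@AComp_exists G c1 (farr s be)) as [phi1 Hphi1].
  { rewrite Ec1t, P2, asrc_farr, Hbe. reflexivity. }
  destruct (AComp_ends Hphi1) as (Ep1s & Ep1t & _).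
  assert (Hphi1_fixed : asrc phi1 = atgt be /\ atgt phi1 = s (atgt be) /\
              farr s phi1 = ainv phi1).
  { split; [rewrite Ep1s, Ec1s, asrc_ainv; reflexivity|].
    split; [rewrite Ep1t, atgt_farr; reflexivity|].
    pose proof (AComp_farr s Hphi1) as S1. rewrite s_invol in S1.
    pose proof (AComp_farr s Hc1) as S2. rewrite farr_ainv, P3 in S2.
    pose proof (AComp_ainv Hc1) as S3. rewrite ainv_ainv in S3.
    exact (AComp_unique (AComp_assoc S2 S1 S3) (AComp_ainv Hphi1)). }
  exists (existT _ (atgt be) (exist _ phi1 Hphi1_fixed)).
  destruct (@AComp_exists G phi (farr s be)) as [h Hh].
  { rewrite P2, asrc_farr, Hbe. reflexivity. }
  split; [exact Hbe|]. split; [reflexivity|]. exists h. split; [|exact Hh].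
  unfold hphi at 1; cbn.
  assert (Hbe_c1 : AComp be c1 phi).
  { assert (E : asrc phi = asrc be) by (rewrite P1, Hbe; reflexivity).
    exact (AComp_assoc (AComp_inv_r be) (AComp_id_l E) Hc1). }
  exact (AComp_assoc Hbe_c1 Hh Hphi1).
Qed.

End HomotopyFixedPoints.

Section HMapLift.
Variables (G H : Groupoid) (sG : GFunctor G G) (sH : GFunctor H H) (F : GFunctor G H).
Hypothesis hob : forall x : G, F (sG x) = sH (F x).
Hypothesis harr : forall a : Arr G, farr F (farr sG a) = farr sH (farr F a).
Hypothesis sG_invol : forall a : Arr G, farr sG (farr sG a) = a.

Lemma hmap_arr_lift (o : HOb sG) (t : HArr sH) (be : Arr G) :
  asrc be = hx o -> hsrc t = hmap_ob hob harr o -> farr F be = hal t ->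
  exists tb : HArr sG, hsrc tb = o /\ hmap_arr hob harr tb = t.
Proof.
  intros Hbe Ht Hal.
  destruct (hob_transport sG_invol Hbe) as [o1 Ho1].
  exists (existT _ o (existT _ o1 (exist _ be Ho1))). split; [reflexivity|].
  apply HArr_eq.
  - symmetry. exact Ht.
  - apply (@is_harr_target_unique H sH (hsrc t) _ _ (hal t)).
    + rewrite Ht, <- Hal. exact (hmap_arr_ok hob harr Ho1).
    + apply hal_spec.
  - exact Hal.
Qed.

End HMapLift.

Section GraphPresheaves.
Variable C : Category.

Record graph_laws (X : PshGraph C) : Prop := {
  vres_id_ob : forall (U : C) (x : vob X U), vres_ob X (idm U) x = x;
  vres_id_arr : forall (U : C) (a : varr X U), vres_arr X (idm U) a = a;
  vres_comp_ob : forall (U V W : C) (f : Hom U V) (g : Hom V W) (x : vob X W),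
    vres_ob X (comp g f) x = vres_ob X f (vres_ob X g x);
  vres_comp_arr : forall (U V W : C) (f : Hom U V) (g : Hom V W) (a : varr X W),
    vres_arr X (comp g f) a = vres_arr X f (vres_arr X g a);
  vsrc_res : forall (U V : C) (f : Hom U V) (a : varr X V),
    vsrc X (vres_arr X f a) = vres_ob X f (vsrc X a) }.

Record graph_mor_natural (X Y : PshGraph C) (m : GraphMor X Y) : Prop := {
  mob_res : forall (U V : C) (f : Hom U V) (x : vob X V),
    mob m (vres_ob X f x) = vres_ob Y f (mob m x);
  marr_res : forall (U V : C) (f : Hom U V) (a : varr X V),
    marr m (vres_arr X f a) = vres_arr Y f (marr m a) }.

Lemma gpd_graph_laws (X : PshGpd C) : graph_laws (gpd_graph X).
Proof.
  split; cbn.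
  - apply gres_id_ob.
  - apply gres_id_arr.
  - apply gres_comp_ob.
  - apply gres_comp_arr.
  - intros. apply asrc_farr.
Qed.

Lemma gpdmor_graph_natural (X Y : PshGpd C) (m : PshGpdMor X Y) :
  graph_mor_natural (gpdmor_graph m).
Proof. split; cbn; [apply gm_nat_ob | apply gm_nat_arr]. Qed.

Lemma hfp_graph_laws (X : PshGpd C) (aX : Z2Action X) : graph_laws (hfp_graph aX).
Proof.
  assert (id_ob : forall U (o : HOb (act aX U)), vres_ob (hfp_graph aX) (idm U) o = o).
  { intros. apply HOb_eq; cbn; [apply gres_id_ob | apply gres_id_arr]. }
  assert (comp_ob : forall U V W (f : Hom U V) (g : Hom V W) (o : HOb (act aX W)),
      vres_ob (hfp_graph aX) (comp g f) o
      = vres_ob (hfp_graph aX) f (vres_ob (hfp_graph aX) g o)).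
  { intros. apply HOb_eq; cbn; [apply gres_comp_ob | apply gres_comp_arr]. }
  split; try reflexivity; auto.
  - intros. apply HArr_eq; [apply id_ob | apply id_ob | apply gres_id_arr].
  - intros. apply HArr_eq; [apply comp_ob | apply comp_ob | apply gres_comp_arr].
Qed.

Lemma hfp_mor_natural (X Y : PshGpd C) (aX : Z2Action X) (aY : Z2Action Y)
  (m : PshGpdMor X Y) (Hm : equivariant aX aY m) : graph_mor_natural (hfp_mor Hm).
Proof.
  assert (nat_ob : forall U V (f : Hom U V) (o : HOb (act aX V)),
      mob (hfp_mor Hm) (vres_ob (hfp_graph aX) f o)
      = vres_ob (hfp_graph aY) f (mob (hfp_mor Hm) o)).
  { intros. apply HOb_eq; cbn; [apply gm_nat_ob | apply gm_nat_arr]. }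
  split; auto.
  intros. apply HArr_eq; [apply nat_ob | apply nat_ob | apply gm_nat_arr].
Qed.

End GraphPresheaves.

Section LocalLifting.
Variables (S : Site) (p : Point S).

Lemma pt_common_refinement (V W W1 W2 : S) (w1 : p W1) (w2 : p W2)
  (c1 : Hom W1 V) (d1 : Hom W1 W) (c2 : Hom W2 V) (d2 : Hom W2 W) :
  ptmap p c1 w1 = ptmap p c2 w2 -> ptmap p d1 w1 = ptmap p d2 w2 ->
  exists (K : S) (k : p K) (h1 : Hom K W1) (h2 : Hom K W2),
    ptmap p h1 k = w1 /\ ptmap p h2 k = w2 /\
    comp c1 h1 = comp c2 h2 /\ comp d1 h1 = comp d2 h2.
Proof.
  intros Ec Ed.
  destruct (pt_pair w1 w2) as (W3 & w3 & e1 & e2 & E1 & E2).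
  assert (Q1 : ptmap p (comp c1 e1) w3 = ptmap p (comp c2 e2) w3)
    by (rewrite !ptmap_comp, E1, E2; exact Ec).
  destruct (pt_equalize Q1) as (W4 & w4 & g & G1 & G2).
  assert (Q2 : ptmap p (comp d1 (comp e1 g)) w4 = ptmap p (comp d2 (comp e2 g)) w4)
    by (rewrite !ptmap_comp, G1, E1, E2; exact Ed).
  destruct (pt_equalize Q2) as (W5 & w5 & k & K1 & K2).
  exists W5, w5, (comp e1 (comp g k)), (comp e2 (comp g k)).
  repeat split.
  - rewrite !ptmap_comp, K1, G1. exact E1.
  - rewrite !ptmap_comp, K1, G1. exact E2.
  - rewrite !comp_assoc, G2. reflexivity.
  - rewrite <- !comp_assoc in K2. exact K2.
Qed.

Definition local_lifting (X Y : PshGraph S) (m : GraphMor X Y) : Prop :=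
  forall (W : S) (w : p W) (x : vob X W) (al : varr Y W), vsrc Y al = mob m x ->
  exists (K : S) (k : p K) (h : Hom K W) (be : varr X K),
    ptmap p h k = w /\ vsrc X be = vres_ob X h x /\ marr m be = vres_arr Y h al.

Variables (X Y : PshGraph S) (m : GraphMor X Y).
Hypotheses (LX : graph_laws X) (LY : graph_laws Y) (Nm : graph_mor_natural m).

Lemma stalk_fibration_local_lifting : stalk_fibration p m -> local_lifting m.
Proof.
  intros Hfib W w x al Hal.
  destruct (Hfib (existT _ W (w, x)) (existT _ W (w, al))) as [[V [v be]] [Hsrc Hmap]].
  { exists W, w, (idm W), (idm W). cbn. rewrite ptmap_id, Hal. auto. }
  destruct Hsrc as (W1 & w1 & c1 & d1 & Ec1 & Ed1 & E1).
  destruct Hmap as (W2 & w2 & c2 & d2 & Ec2 & Ed2 & E2).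
  cbn in *.
  destruct (@pt_common_refinement V W W1 W2 w1 w2 c1 d1 c2 d2)
    as (K & k & h1 & h2 & K1 & _ & Hc & Hd); [congruence | congruence |].
  exists K, k, (comp d1 h1), (vres_arr X (comp c1 h1) be). repeat split.
  - rewrite ptmap_comp, K1. exact Ed1.
  - rewrite (vsrc_res LX); repeat rewrite (vres_comp_ob LX). rewrite E1. reflexivity.
  - rewrite (marr_res Nm), Hc, Hd; repeat rewrite (vres_comp_arr LY). rewrite E2. reflexivity.
Qed.

Lemma local_lifting_stalk_fibration : local_lifting m -> stalk_fibration p m.
Proof.
  intros Hlift [U [u x]] [U' [u' al]] (W & w & a & b & Ea & Eb & E).
  cbn in *.
  destruct (Hlift W w (vres_ob X b x) (vres_arr Y a al)) as (K & k & h & be & Ek & Hsrc & Hmap).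
  { rewrite (vsrc_res LY), E, (mob_res Nm). reflexivity. }
  exists (existT _ K (k, be)). split.
  - exists K, k, (idm K), (comp b h). cbn.
    rewrite ptmap_id, ptmap_comp, Ek, (vres_id_ob LX), (vres_comp_ob LX). auto.
  - exists K, k, (idm K), (comp a h). cbn.
    rewrite ptmap_id, ptmap_comp, Ek, (vres_id_arr LY), (vres_comp_arr LY). auto.
Qed.

End LocalLifting.

Lemma hfp_local_lifting (S : Site) (p : Point S) (X Y : PshGpd S)
  (aX : Z2Action X) (aY : Z2Action Y) (f : PshGpdMor X Y) (Hf : equivariant aX aY f) :
  local_lifting p (gpdmor_graph f) -> local_lifting p (hfp_mor Hf).
Proof.
  intros Hlift W w o t Ht.
  change (hsrc t = mob (hfp_mor Hf) o) in Ht.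
  destruct (Hlift W w (hx o) (hal t)) as (K & k & h & be & Ek & Hsrc & Hmap).
  { destruct (hal_spec t) as [Hs _]. cbn. rewrite Hs, Ht. reflexivity. }
  destruct (hmap_arr_lift (hob := proj1 Hf K) (harr := proj2 Hf K) (@act_invol_arr _ _ aX K)
      (o := vres_ob (hfp_graph aX) h o) (t := vres_arr (hfp_graph aY) h t) Hsrc)
    as (tb & Htb & Hmtb).
  - change (vres_ob (hfp_graph aY) h (hsrc t)
            = mob (hfp_mor Hf) (vres_ob (hfp_graph aX) h o)).
    rewrite Ht. symmetry. apply (mob_res (hfp_mor_natural Hf)).
  - exact Hmap.
  - exists K, k, h, tb. auto.
Qed.

Theorem mainTheorem7 (S : Site) (HS : enough_points S)
  (X Y : PshGpd S) (aX : Z2Action X) (aY : Z2Action Y)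
  (f : PshGpdMor X Y) (Hf : equivariant aX aY f) :
  local_fibration (gpdmor_graph f) -> local_fibration (hfp_mor Hf).
Proof.
  intros Hloc p.
  apply local_lifting_stalk_fibration;
    [apply hfp_graph_laws | apply hfp_graph_laws | apply hfp_mor_natural |].
  apply hfp_local_lifting, stalk_fibration_local_lifting;
    [apply gpd_graph_laws | apply gpd_graph_laws | apply gpdmor_graph_natural | apply Hloc].
Qed.
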